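(* Let $a:\mathcal H\to k$ be linear and define ${}^tL_a:=(a\otimes\mathrm{Id})\circ\Phi:\mathcal H_{CK}\to\mathcal H_{CK}$, and ${}^tL_{m^*a}:\mathcal H_{CK}\otimes\mathcal H_{CK}\to\mathcal H_{CK}\otimes\mathcal H_{CK}$ by ${}^tL_{m^*a}(u\otimes v)=\sum a(u_1v_1)\,u_0\otimes v_0$, where $\Phi(u)=\sum u_1\otimes u_0$, $\Phi(v)=\sum v_1\otimes v_0$. Then $$\Delta_{CK}\circ{}^tL_a={}^tL_{m^*a}\circ\Delta_{CK}.$$ In particular, if $a$ lies in the graded dual $\mathcal H^\circ$, so that $a(xy)=\sum a_1(x)a_2(y)$ for finitely many $a_1,a_2\in\mathcal H^\circ$ (the coproduct of $\mathcal H^\circ$), then $\Delta_{CK}\circ{}^tL_a=\sum({}^tL_{a_1}\otimes{}^tL_{a_2})\circ\Delta_{CK}$.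
   Context: Let $k$ be a field of characteristic $0$. Rooted trees are finite and non-planar; $\bullet$ denotes the one-vertex tree. (1) $\mathcal H$ is the free commutative $k$-algebra generated by isomorphism classes of rooted trees with at least one edge, with unit identified with $\bullet$. A subforest of a rooted tree $t$ is either the trivial subforest $\bullet$ or a nonempty set of pairwise vertex-disjoint subtrees of $t$ each with at least one edge, identified with the product of its components in $\mathcal H$; $t/s$ is the tree obtained by contracting each component of $s$ to a vertex. $\mathcal H$ is a Hopf algebra graded by number of edges, with multiplicative coproduct $\Delta(t)=\sum_s s\otimes t/s$ over subforests of $t$ (as subsets). (2) $\mathcal H_{CK}$ is the free commutative $k$-algebra on isomorphism classes of nonempty rooted trees, with unit the empty forest $\mathbf 1$ and Connes–Kreimer coproduct $\Delta_{CK}(u)=\sum v\otimes w$ over decompositions $U=V\sqcup W$ of the vertex set of the forest $u$ such that no vertex of $V$ lies strictly below (closer to a root along a root-to-vertex path) a vertex of $W$, $v,w$ being the induced forests. (3) $\Phi:\mathcal H_{CK}\to\mathcal H\otimes\mathcal H_{CK}$ is the algebra morphism with $\Phi(\mathbf 1)=\bullet\otimes\mathbf 1$ and $\Phi(t)=\sum_s s\otimes t/s$ (over subforests $s$ of $t$, $s\in\mathcal H$, $t/s\in\mathcal H_{CK}$) for each nonempty tree $t$. *)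

From HB Require Import structures.
From mathcomp Require Import all_boot all_order all_algebra.
Set Implicit Arguments. Unset Strict Implicit. Unset Printing Implicit Defensive.
Import GRing.Theory.

(* A rooted tree is a root with a (planar) list of child subtrees; non-planarity is
   handled by the isomorphism test [tree_iso] below. Every [tree] has >= 1 vertex. *)
Inductive tree := Node of seq tree.

Definition children (t : tree) : seq tree := let: Node cs := t in cs.

Fixpoint nedges (t : tree) : nat :=
  let: Node cs := t in sumn [seq (nedges c).+1 | c <- cs].

Definition nontriv (t : tree) : bool := 0 < nedges t.

(* Dyck-word code of a planar tree (injective) *)
Fixpoint code (t : tree) : seq bool :=
  let: Node cs := t in true :: flatten [seq code c | c <- cs] ++ [:: false].

Fixpoint lexle (s t : seq bool) : bool :=
  match s, t with
  | [::], _ => true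
  | _ :: _, [::] => false
  | a :: s', b :: t' => if a == b then lexle s' t' else ~~ a
  end.

(* canonical planar representative of the isomorphism class *)
Fixpoint canon (t : tree) : tree :=
  let: Node cs := t in
  Node (sort (fun a b => lexle (code a) (code b)) [seq canon c | c <- cs]).

Definition tree_iso (t1 t2 : tree) : bool := code (canon t1) == code (canon t2).

(* forests = monomials of the free commutative algebras *)
Definition forest := seq tree.

(* isomorphism of forests = equality of the corresponding monomials *)
Definition forest_iso (F G : forest) : bool :=
  perm_eq [seq code (canon t) | t <- F] [seq code (canon t) | t <- G].

Definition choices {A : Type} (l : seq (seq A)) : seq (seq A) :=
  foldr (fun xs acc => [seq x :: r | x <- xs, r <- acc]) [:: [::]] l.

(* A set of pairwise vertex-disjoint subtrees with >= 1 edge is the same thing as a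
   set of edges (its components); the empty edge set is the trivial subforest.
   Edges correspond to non-root vertices (edge to the parent); a marked tree records,
   at every vertex, whether the edge to its parent is selected ([keep]). *)
Inductive mtree := MNode (keep : bool) (cs : seq mtree).

Definition mkeep (m : mtree) : bool := let: MNode b _ := m in b.
Definition setkeep (b : bool) (m : mtree) : mtree := let: MNode _ cs := m in MNode b cs.

(* all edge subsets of t, each exactly once *)
Fixpoint markings (t : tree) : seq mtree :=
  let: Node cs := t in
  [seq MNode false l | l <- choices
     [seq [seq setkeep b m | b <- [:: true; false], m <- markings c] | c <- cs]].

(* the component (subtree of selected edges) hanging from the top vertex of m *)
Fixpoint comp (m : mtree) : tree :=
  let: MNode _ cs := m in
  Node (flatten [seq (let: MNode b _ := c in if b then [:: comp c] else [::]) | c <- cs]).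

(* all components of the selected edge set (the subforest s, as a monomial of H) *)
Fixpoint comps (is_top : bool) (m : mtree) : forest :=
  let: MNode _ cs := m in
  (if is_top && has mkeep cs then [:: comp m] else [::]) ++
  flatten [seq comps (~~ mkeep c) c | c <- cs].

(* t/s : contraction of all selected edges *)
Fixpoint contract (m : mtree) : tree :=
  let: MNode _ cs := m in
  Node (flatten [seq (let: MNode b _ := c in
                      if b then children (contract c) else [:: contract c]) | c <- cs]).

(* Phi(t) = sum_s s (x) t/s, as a list of pairs (monomial of H, tree of H_CK) *)
Definition PhiT (t : tree) : seq (forest * tree) :=
  [seq (comps true m, contract m) | m <- markings t].

(* Phi on monomials (forests) of H_CK, extended multiplicatively; Phi(1) = • (x) 1 *)
Definition PhiF (u : forest) : seq (forest * forest) :=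
  [seq (flatten [seq p.1 | p <- l], [seq p.2 | p <- l]) | l <- choices [seq PhiT t | t <- u]].

(* admissible decompositions V |_| W of the vertex set of a tree: pairs (v, w) with
   W upward closed (containing the root if nonempty) *)
Fixpoint cutsT (t : tree) : seq (forest * forest) :=
  let: Node cs := t in
  ([:: t], [::]) ::
  [seq (flatten [seq p.1 | p <- l], [:: Node (flatten [seq p.2 | p <- l])])
  | l <- choices [seq cutsT c | c <- cs]].

Definition DeltaF (u : forest) : seq (forest * forest) :=
  [seq (flatten [seq p.1 | p <- l], flatten [seq p.2 | p <- l])
  | l <- choices [seq cutsT t | t <- u]].

Section Algebra.
Variable k : fieldType.
Local Open Scope ring_scope.

(* elements of H_CK: finite formal k-linear combinations of forests;
   elements of H_CK (x) H_CK: formal combinations of pairs of forests *)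
Definition HCK := seq (k * forest).
Definition HCK2 := seq (k * (forest * forest)).

(* coefficient of the basis monomial (iso class of) F, resp. F (x) G *)
Definition coef1 (x : HCK) (F : forest) : k :=
  \sum_(p <- x | forest_iso p.2 F) p.1.
Definition coef2 (x : HCK2) (F G : forest) : k :=
  \sum_(p <- x | forest_iso p.2.1 F && forest_iso p.2.2 G) p.1.

(* a linear form a : H -> k is given by its values on monomials of H, i.e. on forests
   of trees with at least one edge, invariantly under isomorphism *)
Definition Hlinform := forest -> k.
Definition iso_invariant (a : Hlinform) : Prop :=
  forall F G, all nontriv F -> forest_iso F G -> a F = a G.

(* graded dual H°: a vanishes on all homogeneous components of degree > N *)
Definition in_graded_dual (a : Hlinform) : Prop :=
  iso_invariant a /\
  exists N : nat, forall F, all nontriv F -> (N < sumn [seq nedges t | t <- F])%N -> a F = 0.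

Definition DeltaCK (x : HCK) : HCK2 :=
  flatten [seq [seq (cu.1, p) | p <- DeltaF cu.2] | cu <- x].

Definition tL (a : Hlinform) (x : HCK) : HCK :=
  flatten [seq [seq (cu.1 * a p.1, p.2) | p <- PhiF cu.2] | cu <- x].

Definition tLm (a : Hlinform) (y : HCK2) : HCK2 :=
  flatten [seq [seq (c.1 * a (p.1 ++ q.1), (p.2, q.2)) | p <- PhiF c.2.1, q <- PhiF c.2.2]
          | c <- y].

Definition tLtens (a1 a2 : Hlinform) (y : HCK2) : HCK2 :=
  flatten [seq [seq (c.1 * a1 p.1 * a2 q.1, (p.2, q.2)) | p <- PhiF c.2.1, q <- PhiF c.2.2]
          | c <- y].

End Algebra.

Definition all_prop {A : Type} (P : A -> Prop) (s : seq A) : Prop :=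
  foldr (fun x acc => P x /\ acc) True s.

From Pilot Require Import Defs.
From mathcomp Require Import all_boot all_order all_algebra.
Set Implicit Arguments. Unset Strict Implicit. Unset Printing Implicit Defensive.

(* Both sides are linear, so it suffices to compare them on a single forest u of
   H_CK.  Expanding the definitions, the left side is the weighted multiset of
   triples (s, v, w) with s a subforest of u and (v, w) an admissible cut of u/s,
   the right side the multiset of triples (s1 s2, v/s1, w/s2) with (v, w) an
   admissible cut of u and s1, s2 subforests of v, w; each triple is weighted by
   a(s).  The heart of the proof is that these two multisets agree up to
   isomorphism of each component ([lhs_rhs_forest]).  Multiplicativity reduces
   this to a single tree, which is handled by induction on the tree, splitting
   each term according to whether the cut is total or, if not, how the subforest
   meets the root and its children.  All multiset identities are formulated as
   equality of the multisets of canonical keys ([eq_keys]), where the key of a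
   forest is the sorted list of canonical codes of its trees, so that equal keys
   mean isomorphic forests.  Finally, iso-invariance of a on forests of
   nontrivial trees turns the multiset identity into equality of coefficients;
   the second statement follows by expanding a(XY) = sum a1(X) a2(Y). *)

(* A nat-valued sum over a dependent product list (stated with [addn] so that
   it rewrites inside nat sums). *)
Lemma big_allpairs_nat (S T U : Type) (f : S -> T -> U) (s : seq S) (t : S -> seq T)
    (phi : U -> nat) :
  \sum_(z <- [seq f x y | x <- s, y <- t x]) phi z = \sum_(x <- s) \sum_(y <- t x) phi (f x y).
Proof. exact: big_allpairs_dep. Qed.

Lemma big_choices_cons (A : Type) (a : seq A) (l : seq (seq A)) (phi : seq A -> nat) :
  \sum_(z <- choices (a :: l)) phi z = \sum_(x <- a) \sum_(r <- choices l) phi (x :: r).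
Proof. exact: big_allpairs_nat. Qed.

Lemma big_choices_map (A B : Type) (f : A -> B) (ls : seq (seq A)) (phi : seq B -> nat) :
  \sum_(z <- choices (map (map f) ls)) phi z = \sum_(z <- choices ls) phi (map f z).
Proof.
elim: ls phi => [|a ls IH] phi; first by rewrite /= !big_cons !big_nil.
by rewrite map_cons !big_choices_cons big_map; apply: eq_bigr => x _; apply: IH.
Qed.

Lemma big_choices_cat (A : Type) (L M : seq (seq A)) (phi : seq A -> nat) :
  \sum_(z <- choices (L ++ M)) phi z =
  \sum_(x <- choices L) \sum_(y <- choices M) phi (x ++ y).
Proof.
elim: L phi => [|a L IH] phi /=; first by rewrite big_cons big_nil addn0.
by rewrite !big_choices_cons; apply: eq_bigr => x _; apply: IH.
Qed.

Lemma big_choices_flatten (A : Type) (Ls : seq (seq (seq A))) (phi : seq A -> nat) :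
  \sum_(z <- choices (flatten Ls)) phi z =
  \sum_(ys <- choices (map choices Ls)) phi (flatten ys).
Proof.
elim: Ls phi => [|L Ls IH] phi /=; first by rewrite !big_cons !big_nil.
by rewrite big_choices_cat big_choices_cons; apply: eq_bigr => x _; apply: IH.
Qed.

Lemma big_choices_dep (A B : Type) (h : A -> seq B) (As : seq (seq A))
    (phi : seq A -> seq B -> nat) :
  \sum_(l <- choices As) \sum_(ys <- choices (map h l)) phi l ys =
  \sum_(zs <- choices [seq [seq (x, y) | x <- a, y <- h x] | a <- As])
      phi (map fst zs) (map snd zs).
Proof.
elim: As phi => [|a As IH] phi; first by rewrite /= !big_cons !big_nil !addn0.
rewrite map_cons !big_choices_cons big_allpairs_nat; apply: eq_bigr => x _.
under eq_bigr => r _ do rewrite map_cons big_choices_cons.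
by rewrite exchange_big; apply: eq_bigr => y _; apply: (IH (fun l ys => phi (x :: l) (y :: ys))).
Qed.

Lemma big_choices_pair (A B C : Type) (h1 : A -> seq B) (h2 : A -> seq C) (l : seq A)
    (phi : seq B -> seq C -> nat) :
  \sum_(ys <- choices (map h1 l)) \sum_(zs <- choices (map h2 l)) phi ys zs =
  \sum_(w <- choices [seq [seq (y, z) | y <- h1 x, z <- h2 x] | x <- l])
      phi (map fst w) (map snd w).
Proof.
elim: l phi => [|x l IH] phi; first by rewrite /= !big_cons !big_nil !addn0.
rewrite !map_cons !big_choices_cons big_allpairs_nat; apply: eq_bigr => y _.
under eq_bigr => ys _ do rewrite big_choices_cons.
by rewrite exchange_big; apply: eq_bigr => z _; apply: (IH (fun ys zs => phi (y :: ys) (z :: zs))).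
Qed.

(* [eq_keys key L R]: the lists L and R have the same multiset of keys, phrased
   through all nat-valued test functions on keys (equivalent to [perm_eq] of the
   key lists, see [eq_keys_perm]); this is the notion of equality of the two
   sides of the theorem before coefficients are taken. *)
Definition eq_keys (X K : Type) (key : X -> K) (L R : seq X) :=
  forall phi : K -> nat, \sum_(x <- L) phi (key x) = \sum_(x <- R) phi (key x).

Lemma eq_keys_sym (X K : Type) (key : X -> K) L M : eq_keys key L M -> eq_keys key M L.
Proof. by move=> H phi; rewrite H. Qed.

Lemma eq_keys_trans (X K : Type) (key : X -> K) L M R :
  eq_keys key L M -> eq_keys key M R -> eq_keys key L R.
Proof. by move=> H1 H2 phi; rewrite H1 H2. Qed.

Lemma eq_keys_cat (X K : Type) (key : X -> K) L1 L2 R1 R2 :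
  eq_keys key L1 R1 -> eq_keys key L2 R2 -> eq_keys key (L1 ++ L2) (R1 ++ R2).
Proof. by move=> H1 H2 phi; rewrite !big_cat H1 H2. Qed.

Lemma eq_keys_map (X Y K K' : Type) (key : X -> K) (key' : Y -> K') (g : X -> Y)
    (h : K -> K') (L R : seq X) :
  (forall x, key' (g x) = h (key x)) -> eq_keys key L R -> eq_keys key' (map g L) (map g R).
Proof.
move=> Hg HL phi; rewrite !big_map.
under eq_bigr => x _ do rewrite Hg.
under [RHS]eq_bigr => x _ do rewrite Hg.
exact: (HL (phi \o h)).
Qed.

Lemma eq_keys_perm (X : Type) (K : eqType) (key : X -> K) L R :
  eq_keys key L R -> perm_eq (map key L) (map key R).
Proof.
move=> H; apply/permP => P; rewrite !count_map.
have count_sum (S : seq X) :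
    count (preim key P) S = \sum_(x <- S) (fun kx => nat_of_bool (P kx)) (key x).
  by elim: S => [|x S IHS]; rewrite ?big_nil ?big_cons //= IHS.
by rewrite !count_sum; apply: (H (fun kx => nat_of_bool (P kx))).
Qed.

Fixpoint eq_keys_seq (X K : Type) (key : X -> K) (ls ls' : seq (seq X)) : Prop :=
  match ls, ls' with
  | [::], [::] => True
  | a :: r, a' :: r' => eq_keys key a a' /\ eq_keys_seq key r r'
  | _, _ => False
  end.

Lemma eq_keys_seq_map (X Y K : Type) (key : Y -> K) (f g : X -> seq Y) (cs : seq X) :
  all_prop (fun c => eq_keys key (f c) (g c)) cs -> eq_keys_seq key (map f cs) (map g cs).
Proof. by elim: cs => [|c cs IH] //= [H1 H2]; split => //; apply: IH. Qed.

Lemma all_propP (X : Type) (P : X -> Prop) (s : seq X) : (forall x, P x) -> all_prop P s.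
Proof. by move=> H; elim: s => //= x s IH; split. Qed.

Lemma all_prop_impl (X : Type) (P Q : X -> Prop) (s : seq X) :
  (forall x, P x -> Q x) -> all_prop P s -> all_prop Q s.
Proof. by move=> H; elim: s => //= x s IH [H1 H2]; split; [apply: H | apply: IH]. Qed.

Lemma eq_keys_seq_choices (X K : Type) (key : X -> K) ls ls' :
  eq_keys_seq key ls ls' -> forall psi : seq K -> nat,
  \sum_(l <- choices ls) psi (map key l) = \sum_(l <- choices ls') psi (map key l).
Proof.
elim: ls ls' => [|a ls IH] [|a' ls'] //= [Ha Hl] psi.
rewrite !big_choices_cons.
under eq_bigr => x _ do rewrite (IH _ Hl (fun r => psi (key x :: r))).
rewrite exchange_big [RHS]exchange_big /=; apply: eq_bigr => r _.
exact: (Ha (fun kx => psi (kx :: map key r))).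
Qed.

Lemma eq_keys_choices (X K K' : Type) (key : X -> K) (comb : seq X -> X) (key' : X -> K')
    (g : seq K -> K') ls ls' :
  (forall w, key' (comb w) = g (map key w)) -> eq_keys_seq key ls ls' ->
  eq_keys key' (map comb (choices ls)) (map comb (choices ls')).
Proof.
move=> Hcomb Hls phi; rewrite !big_map.
under eq_bigr => w _ do rewrite Hcomb.
under [RHS]eq_bigr => w _ do rewrite Hcomb.
exact: (eq_keys_seq_choices Hls (phi \o g)).
Qed.

(* Canonical keys.  [lexle] is a total order on codes; the key of a forest is the
   sorted list of the canonical codes of its trees, a complete invariant of
   [forest_iso]. *)

Lemma lexle_total : total lexle.
Proof. by elim=> [|a s IH] [|b t] //=; case: a; case: b => //=; apply: IH. Qed.

Lemma lexle_trans : transitive lexle.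
Proof.
move=> y x; elim: x y => [|a s IH] [|b t] [|c u] //=.
by case: a; case: b; case: c => //=; apply: IH.
Qed.

Lemma lexle_anti : antisymmetric lexle.
Proof. by elim=> [|a s IH] [|b t] //=; case: a; case: b => //= /IH ->. Qed.

Definition ssort (s : seq (seq bool)) := sort lexle s.

Lemma ssortP s1 s2 : reflect (ssort s1 = ssort s2) (perm_eq s1 s2).
Proof. exact: (perm_sortP lexle_total lexle_trans lexle_anti). Qed.

Lemma perm_ssort s : perm_eq (ssort s) s.
Proof. by rewrite /ssort perm_sort. Qed.

Definition ckey (t : tree) : seq bool := code (canon t).
Definition skey (F : forest) : seq (seq bool) := ssort (map ckey F).

Definition node_code (ks : seq (seq bool)) : seq bool := true :: flatten ks ++ [:: false].

Lemma ckey_node F : ckey (Node F) = node_code (skey F).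
Proof.
rewrite /ckey /skey /ssort /node_code /=; congr (_ :: flatten _ ++ _).
by rewrite [in RHS](_ : map _ F = map code (map canon F)) ?sort_map // -map_comp.
Qed.

Lemma skey1 t : skey [:: t] = [:: ckey t].
Proof. by []. Qed.

Lemma forest_isoE F G : forest_iso F G = (skey F == skey G).
Proof. exact/ssortP/eqP. Qed.

Lemma skey_perm F G : perm_eq (map ckey F) (map ckey G) -> skey F = skey G.
Proof. exact/ssortP. Qed.

Lemma skey_cat F G : skey (F ++ G) = ssort (skey F ++ skey G).
Proof.
by apply/ssortP; rewrite map_cat; apply: perm_cat; rewrite perm_sym perm_ssort.
Qed.

Lemma skey_flatten Fs : skey (flatten Fs) = ssort (flatten (map skey Fs)).
Proof.
apply/ssortP; elim: Fs => [|F Fs IH] //=.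
by rewrite map_cat; apply: perm_cat => //; rewrite perm_sym perm_ssort.
Qed.

Lemma skey_flatten_cat (X : Type) (f g : X -> forest) s :
  skey (flatten (map f s) ++ flatten (map g s)) = skey (flatten (map (fun x => f x ++ g x) s)).
Proof.
apply: skey_perm; elim: s => //= x s IH; rewrite !map_cat.
by rewrite perm_catACA perm_cat2l -!map_cat.
Qed.

Lemma size_skey F : size (skey F) = size F.
Proof. by rewrite size_sort size_map. Qed.

(* For a marking m of a tree (an
   edge set, i.e. a subforest s), the component of s through the root is
   recorded by the forest hanging below the root inside it, and the remaining
   components are listed separately. *)

Definition root_comp_children (m : mtree) : forest := children (Defs.comp m).

Definition other_comps (m : mtree) : forest :=
  let: MNode _ cs := m in flatten [seq comps (~~ mkeep c) c | c <- cs].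

(* A root component with no edge does not count as a component of s. *)
Definition nonempty_node (F : forest) : forest := if F is [::] then [::] else [:: Node F].

(* The forest that a child marking c contributes below the root of t/s: the
   children of its contraction if its edge to the root is contracted, the
   contraction itself otherwise. *)
Definition contracted_children (c : mtree) : forest :=
  if mkeep c then children (contract c) else [:: contract c].

Definition child_markings (c : tree) : seq mtree :=
  [seq setkeep b m | b <- [:: true; false], m <- markings c].

Lemma markings_node cs : markings (Node cs) = map (MNode false) (choices (map child_markings cs)).
Proof. by []. Qed.

Lemma comp_root m : Defs.comp m = Node (root_comp_children m).
Proof. by case: m. Qed.

Lemma contract_node m : contract m = Node (children (contract m)).
Proof. by case: m. Qed.

Lemma comps_true m : comps true m = nonempty_node (root_comp_children m) ++ other_comps m.
Proof.
case: m => b cs /=; rewrite /root_comp_children /=; congr (_ ++ _).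
by elim: cs => [|[[] cs'] cs IH] //=.
Qed.

Lemma comps_false m : comps false m = other_comps m.
Proof. by case: m. Qed.

Lemma setkeepK b m : mkeep (setkeep b m) = b. Proof. by case: m. Qed.
Lemma comps_setkeep b' b m : comps b' (setkeep b m) = comps b' m. Proof. by case: m. Qed.
Lemma comp_setkeep b m : Defs.comp (setkeep b m) = Defs.comp m. Proof. by case: m. Qed.
Lemma contract_setkeep b m : contract (setkeep b m) = contract m. Proof. by case: m. Qed.

Lemma contract_MNode l : contract (MNode false l) = Node (flatten (map contracted_children l)).
Proof. by rewrite /=; congr (Node (flatten _)); apply: eq_map => -[[] cs]. Qed.

Lemma root_comp_children_MNode b l : root_comp_children (MNode b l) =
  flatten [seq (if mkeep x then [:: Defs.comp x] else [::]) | x <- l].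
Proof. by rewrite /root_comp_children /=; congr flatten; apply: eq_map => -[[] cs]. Qed.

Lemma other_comps_flatten (ms : seq (seq mtree)) :
  other_comps (MNode false (flatten ms)) = flatten (map (fun l => other_comps (MNode false l)) ms).
Proof. by elim: ms => //= l ms IH; rewrite map_cat flatten_cat IH. Qed.

Lemma root_comp_children_flatten (ms : seq (seq mtree)) :
  root_comp_children (MNode false (flatten ms)) =
  flatten (map (fun l => root_comp_children (MNode false l)) ms).
Proof.
rewrite !root_comp_children_MNode; elim: ms => //= l ms IH.
by rewrite map_cat flatten_cat IH root_comp_children_MNode.
Qed.

Lemma contract_children_flatten (ms : seq (seq mtree)) :
  children (contract (MNode false (flatten ms))) =
  flatten (map (fun l => children (contract (MNode false l))) ms).
Proof.
rewrite contract_MNode; under [in RHS]eq_map => l do rewrite contract_MNode.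
by elim: ms => //= l ms IH; rewrite map_cat flatten_cat IH.
Qed.

Lemma other_comps1 z : other_comps (MNode false [:: z]) = comps (~~ mkeep z) z.
Proof. by rewrite /= cats0. Qed.

Lemma root_comp_children1 z :
  root_comp_children (MNode false [:: z]) = if mkeep z then [:: Defs.comp z] else [::].
Proof. by rewrite root_comp_children_MNode /= cats0. Qed.

Lemma contract_children1 z : children (contract (MNode false [:: z])) = contracted_children z.
Proof. by rewrite contract_MNode /= cats0. Qed.

(* Admissible cuts.  Apart from the total cut (everything pruned), a cut of T
   keeps a nonempty trunk through the root, recorded by its children. *)

Definition cat_pairs (l : seq (forest * forest)) : forest * forest :=
  (flatten [seq p.1 | p <- l], flatten [seq p.2 | p <- l]).

Definition trunk_cuts (T : tree) : seq (forest * forest) :=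
  [seq cat_pairs l | l <- choices [seq cutsT c | c <- children T]].

Lemma cutsT_trunk T : cutsT T = ([:: T], [::]) :: [seq (p.1, [:: Node p.2]) | p <- trunk_cuts T].
Proof. by case: T => cs /=; rewrite /trunk_cuts -map_comp. Qed.

Lemma cat_pairs_flatten (ys : seq (seq (forest * forest))) :
  cat_pairs (flatten ys) = cat_pairs (map cat_pairs ys).
Proof.
rewrite /cat_pairs /= -!map_comp; congr (_, _); elim: ys => [|y ys IH] //=;
by rewrite map_cat flatten_cat IH.
Qed.

Lemma big_PhiF1 t (psi : forest * forest -> nat) :
  \sum_(p <- PhiF [:: t]) psi p = \sum_(x <- PhiT t) psi (x.1, [:: x.2]).
Proof.
rewrite /PhiF big_map map_cons big_choices_cons; apply: eq_bigr => x _.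
by rewrite /= big_cons big_nil addn0 cats0.
Qed.

Lemma big_PhiF_flatten (Fs : seq forest) (psi : forest * forest -> nat) :
  \sum_(p <- PhiF (flatten Fs)) psi p = \sum_(ps <- choices (map PhiF Fs)) psi (cat_pairs ps).
Proof.
rewrite /PhiF big_map map_flatten big_choices_flatten -map_comp.
pose g (l : seq (forest * tree)) := (flatten [seq p.1 | p <- l], [seq p.2 | p <- l]).
rewrite (_ : map _ Fs = map (map g) (map (fun u => choices (map PhiT u)) Fs)); last first.
  by rewrite -map_comp.
rewrite (big_choices_map g _ (fun ps => psi (cat_pairs ps))).
apply: eq_bigr => ys _; congr psi; rewrite /cat_pairs /=.
by elim: ys => [|y ys IH] //=; rewrite !map_cat flatten_cat; case: IH => -> ->.
Qed.

Lemma big_markings_flatten (Ws : seq forest) (psi : mtree -> nat) :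
  \sum_(m <- markings (Node (flatten Ws))) psi m =
  \sum_(ms <- choices [seq choices (map child_markings w) | w <- Ws]) psi (MNode false (flatten ms)).
Proof. by rewrite markings_node big_map map_flatten big_choices_flatten -map_comp. Qed.

(* A triple (s, v, w) is a term of
   H (x) H_CK (x) H_CK; the left side of the theorem on a tree t gives the
   triples [lhs_trips t], the right side the triples [rhs_trips t]. *)

Definition trip := (forest * forest * forest)%type.
Definition keys3 := (seq (seq bool) * seq (seq bool) * seq (seq bool))%type.
Definition key3 (x : trip) : keys3 := (skey x.1.1, skey x.1.2, skey x.2).

Definition lhs_trips (t : tree) : seq trip :=
  [seq (p.1, q.1, q.2) | p <- PhiT t, q <- cutsT p.2].
Definition rhs_trips (t : tree) : seq trip :=
  flatten [seq [seq (p.1 ++ p'.1, p.2, p'.2) | p <- PhiF q.1, p' <- PhiF q.2] | q <- cutsT t].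

Definition total_cut_trips (t : tree) : seq trip := [seq (p.1, [:: p.2], [::]) | p <- PhiT t].

(* The remaining terms are refined into quadruples (R, O, v, W): R is the forest
   below the root in the root component of s, O the other components of s, v
   the pruned forest and W the forest below the root of the trunk. *)
Definition quad := (forest * forest * forest * forest)%type.
Definition keys4 := (seq (seq bool) * seq (seq bool) * seq (seq bool) * seq (seq bool))%type.
Definition key4 (x : quad) : keys4 := (skey x.1.1.1, skey x.1.1.2, skey x.1.2, skey x.2).

Definition close_quad (x : quad) : trip :=
  (nonempty_node x.1.1.1 ++ x.1.1.2, x.1.2, [:: Node x.2]).

Definition lhs_quads (t : tree) : seq quad :=
  [seq (root_comp_children m, other_comps m, q.1, q.2)
  | m <- markings t, q <- trunk_cuts (contract m)].
Definition rhs_quads (t : tree) : seq quad :=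
  flatten [seq [seq (root_comp_children m, p.1 ++ other_comps m, p.2, children (contract m))
               | p <- PhiF q.1, m <- markings (Node q.2)] | q <- trunk_cuts t].

Lemma lhs_trips_split t :
  eq_keys key3 (lhs_trips t) (total_cut_trips t ++ map close_quad (lhs_quads t)).
Proof.
move=> phi; rewrite big_cat /= /lhs_trips /total_cut_trips /lhs_quads !big_map.
rewrite !big_allpairs_nat /PhiT !big_map -big_split; apply: eq_bigr => m _ /=.
by rewrite cutsT_trunk big_cons big_map comps_true.
Qed.

(* Likewise on the right, where the root component of s lies in the trunk. *)
Lemma rhs_trips_split t :
  eq_keys key3 (rhs_trips t) (total_cut_trips t ++ map close_quad (rhs_quads t)).
Proof.
move=> phi; rewrite big_cat /rhs_trips /total_cut_trips /rhs_quads !big_map big_flatten /=.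
rewrite big_map cutsT_trunk big_cons; congr (_ + _).
  rewrite big_allpairs_nat big_PhiF1 /PhiT !big_map; apply: eq_bigr => m _.
  by rewrite /= big_cons big_nil addn0 /key3 /= !cats0.
rewrite big_flatten /= !big_map; apply: eq_bigr => q _ /=.
rewrite !big_allpairs_nat; apply: eq_bigr => p _.
rewrite big_PhiF1 /PhiT big_map; apply: eq_bigr => m _.
rewrite /key3 /close_quad -contract_node /=; congr (phi (_, _, _)).
by apply: skey_perm; rewrite !map_cat comps_true map_cat perm_catCA.
Qed.

(* A term for [Node cs] is assembled from one piece
   per child c: if the edge to c lies in s, a quadruple of c whose root component
   is grafted below the root; otherwise a triple of c (for which the root of c
   ends up in the pruned part or in the trunk). *)

Definition keep_root_edge (x : quad) : quad := ([:: Node x.1.1.1], x.1.1.2, x.1.2, x.2).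
Definition cut_root_edge (y : trip) : quad := ([::], y.1.1, y.1.2, y.2).

Definition lhs_child (c : tree) : seq quad :=
  map keep_root_edge (lhs_quads c) ++ map cut_root_edge (lhs_trips c).
Definition rhs_child (c : tree) : seq quad :=
  map keep_root_edge (rhs_quads c) ++ map cut_root_edge (rhs_trips c).

Definition cat_quads (l : seq quad) : quad :=
  (flatten [seq x.1.1.1 | x <- l], flatten [seq x.1.1.2 | x <- l],
   flatten [seq x.1.2 | x <- l], flatten [seq x.2 | x <- l]).

Definition cat_keys4 (ks : seq keys4) : keys4 :=
  (ssort (flatten [seq x.1.1.1 | x <- ks]), ssort (flatten [seq x.1.1.2 | x <- ks]),
   ssort (flatten [seq x.1.2 | x <- ks]), ssort (flatten [seq x.2 | x <- ks])).

Lemma key4_cat_quads w : key4 (cat_quads w) = cat_keys4 (map key4 w).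
Proof. by rewrite /key4 /cat_quads /cat_keys4 /= !skey_flatten -!map_comp. Qed.

Lemma eq_keys_cat_quads ls ls' :
  eq_keys_seq key4 ls ls' -> eq_keys key4 (map cat_quads (choices ls)) (map cat_quads (choices ls')).
Proof. exact: eq_keys_choices key4_cat_quads. Qed.

(* Left side: the piece of a child marking z.1 and a choice z.2 of cuts of the
   trees it contributes below the root of t/s. *)
Definition child_cut_choices (c : mtree) := choices [seq cutsT x | x <- contracted_children c].
Definition lhs_piece (z : mtree * seq (forest * forest)) : quad :=
  (if mkeep z.1 then [:: Defs.comp z.1] else [::], comps (~~ mkeep z.1) z.1,
   (cat_pairs z.2).1, (cat_pairs z.2).2).

Lemma cat_quads_lhs_piece zs :
  (root_comp_children (MNode false (map fst zs)), other_comps (MNode false (map fst zs)),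
   (cat_pairs (map cat_pairs (map snd zs))).1, (cat_pairs (map cat_pairs (map snd zs))).2)
  = cat_quads (map lhs_piece zs).
Proof.
rewrite root_comp_children_MNode /other_comps /cat_quads /cat_pairs /= -!map_comp.
by elim: zs => [|z zs IH] //=.
Qed.

Lemma lhs_quads_pieces cs (phi : _ -> nat) :
  \sum_(x <- lhs_quads (Node cs)) phi (key4 x) =
  \sum_(w <- choices [seq map lhs_piece [seq (x, y) | x <- child_markings c,
                                                   y <- child_cut_choices x] | c <- cs])
     phi (key4 (cat_quads w)).
Proof.
rewrite /lhs_quads big_allpairs_nat markings_node big_map.
under eq_bigr => l _.
  rewrite contract_MNode /trunk_cuts /= big_map map_flatten big_choices_flatten -map_comp.
  rewrite (_ : map _ (map _ l) = map child_cut_choices l); last by rewrite -map_comp.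
  under eq_bigr => ys _ do rewrite cat_pairs_flatten.
over.
rewrite (big_choices_dep child_cut_choices _ (fun l ys => phi (key4
  (root_comp_children (MNode false l), other_comps (MNode false l),
   (cat_pairs (map cat_pairs ys)).1, (cat_pairs (map cat_pairs ys)).2)))).
under eq_bigr => zs _ do rewrite cat_quads_lhs_piece.
by rewrite -(big_choices_map lhs_piece _ (fun w => phi (key4 (cat_quads w)))) -!map_comp.
Qed.

Lemma lhs_pieces_child c :
  eq_keys key4 (map lhs_piece [seq (x, y) | x <- child_markings c, y <- child_cut_choices x])
               (lhs_child c).
Proof.
move=> phi; rewrite big_map big_allpairs_nat /child_markings big_allpairs_nat.
rewrite !big_cons big_nil addn0.
rewrite /lhs_child big_cat /= !big_map /lhs_quads /lhs_trips !big_allpairs_nat /PhiT big_map.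
congr (_ + _); apply: eq_bigr => m _.
  rewrite /child_cut_choices /contracted_children setkeepK contract_setkeep /trunk_cuts big_map.
  apply: eq_bigr => y _.
  by rewrite /lhs_piece /= setkeepK comps_setkeep comp_setkeep comps_false comp_root.
rewrite /child_cut_choices /contracted_children setkeepK contract_setkeep map_cons.
rewrite big_choices_cons; apply: eq_bigr => q _; rewrite /= big_cons big_nil addn0.
by rewrite /lhs_piece /key4 /= setkeepK comps_setkeep /cat_pairs /= !cats0.
Qed.

Lemma lhs_quads_node cs :
  eq_keys key4 (lhs_quads (Node cs)) (map cat_quads (choices (map lhs_child cs))).
Proof.
move=> phi; rewrite lhs_quads_pieces.
have := eq_keys_cat_quads (eq_keys_seq_map (all_propP cs lhs_pieces_child)) phi.
by rewrite !big_map.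
Qed.

(* Right side: the piece of a cut x of a child, a subforest p of its pruned part
   and a marking of the trees it contributes to the trunk. *)
Definition rhs_child_choices (x : forest * forest) :=
  [seq (y, z) | y <- PhiF x.1, z <- choices (map child_markings x.2)].
Definition rhs_piece (z : (forest * forest) * ((forest * forest) * seq mtree)) : quad :=
  (root_comp_children (MNode false z.2.2), z.2.1.1 ++ other_comps (MNode false z.2.2), z.2.1.2,
   children (contract (MNode false z.2.2))).

Definition rhs_quad_of (w : seq ((forest * forest) * seq mtree)) : quad :=
  (root_comp_children (MNode false (flatten (map snd w))),
   (cat_pairs (map fst w)).1 ++ other_comps (MNode false (flatten (map snd w))),
   (cat_pairs (map fst w)).2,
   children (contract (MNode false (flatten (map snd w))))).

Lemma cat_quads_rhs_piece zs :
  key4 (rhs_quad_of (map snd zs)) = key4 (cat_quads (map rhs_piece zs)).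
Proof.
rewrite /key4 /rhs_quad_of /cat_quads root_comp_children_flatten other_comps_flatten.
rewrite contract_children_flatten /cat_pairs; cbn [fst snd]; rewrite -!map_comp.
congr (_, _, _, _).
exact: (skey_flatten_cat (fun z => z.2.1.1) (fun z => other_comps (MNode false z.2.2))).
Qed.

Lemma rhs_quads_pieces cs (phi : _ -> nat) :
  \sum_(x <- rhs_quads (Node cs)) phi (key4 x) =
  \sum_(w <- choices [seq map rhs_piece [seq (x, yz) | x <- cutsT c, yz <- rhs_child_choices x]
                     | c <- cs])
     phi (key4 (cat_quads w)).
Proof.
rewrite /rhs_quads big_flatten /= big_map /trunk_cuts big_map.
under eq_bigr => l _.
  rewrite big_allpairs_nat /cat_pairs; cbn [fst snd]; rewrite big_PhiF_flatten.
  under eq_bigr => ps _ do rewrite big_markings_flatten -map_comp.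
  rewrite -map_comp (big_choices_pair (fun x => PhiF x.1) (fun x => choices (map child_markings x.2))
     l (fun ps ms => phi (key4 (root_comp_children (MNode false (flatten ms)),
       (cat_pairs ps).1 ++ other_comps (MNode false (flatten ms)), (cat_pairs ps).2,
       children (contract (MNode false (flatten ms))))))).
over.
rewrite (big_choices_dep rhs_child_choices _ (fun _ w => phi (key4 (rhs_quad_of w)))).
under eq_bigr => zs _ do rewrite cat_quads_rhs_piece.
by rewrite -(big_choices_map rhs_piece _ (fun w => phi (key4 (cat_quads w)))) -!map_comp.
Qed.

Lemma rhs_pieces_child c :
  eq_keys key4 (map rhs_piece [seq (x, yz) | x <- cutsT c, yz <- rhs_child_choices x])
               (rhs_child c).
Proof.
move=> phi; rewrite big_map big_allpairs_nat /rhs_child big_cat /= !big_map /rhs_quads /rhs_trips.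
rewrite !big_flatten /= !big_map cutsT_trunk !big_cons !big_map addnCA; congr (_ + _).
  rewrite /rhs_child_choices !big_allpairs_nat; apply: eq_bigr => p _.
  by rewrite /= !big_cons !big_nil.
rewrite -big_split; apply: eq_bigr => j _; case: (cat_pairs j) => V W; cbn [fst snd].
rewrite /rhs_child_choices !big_allpairs_nat -big_split; apply: eq_bigr => p _.
rewrite big_PhiF1 map_cons big_choices_cons /child_markings big_allpairs_nat.
rewrite !big_cons big_nil addn0 /PhiT !big_map.
congr (_ + _); apply: eq_bigr => m _; rewrite big_cons big_nil addn0 /rhs_piece; cbn [fst snd].
  rewrite root_comp_children1 other_comps1 contract_children1 /contracted_children.
  by rewrite setkeepK comp_setkeep comps_setkeep comps_false comp_root contract_setkeep.
rewrite root_comp_children1 other_comps1 contract_children1 /contracted_children.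
by rewrite setkeepK comps_setkeep contract_setkeep /key4 /= ?cats0.
Qed.

Lemma rhs_quads_node cs :
  eq_keys key4 (rhs_quads (Node cs)) (map cat_quads (choices (map rhs_child cs))).
Proof.
move=> phi; rewrite rhs_quads_pieces.
have := eq_keys_cat_quads (eq_keys_seq_map (all_propP cs rhs_pieces_child)) phi.
by rewrite !big_map.
Qed.

Fixpoint tree_rect_all (P : tree -> Prop) (H : forall cs, all_prop P cs -> P (Node cs))
    (t : tree) : P t :=
  let: Node cs := t in
  H cs ((fix all_children (cs : seq tree) : all_prop P cs :=
           if cs is c :: cs' then conj (tree_rect_all H c) (all_children cs') else I) cs).

Definition keep_root_edge_key (k : keys4) : keys4 := ([:: node_code k.1.1.1], k.1.1.2, k.1.2, k.2).
Definition cut_root_edge_key (k : keys3) : keys4 := ([::], k.1.1, k.1.2, k.2).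
Definition close_quad_key (k : keys4) : keys3 :=
  (ssort ((if k.1.1.1 is [::] then [::] else [:: node_code k.1.1.1]) ++ k.1.1.2),
   k.1.2, [:: node_code k.2]).

Lemma key4_keep_root_edge x : key4 (keep_root_edge x) = keep_root_edge_key (key4 x).
Proof. by rewrite /key4 /keep_root_edge /= skey1 ckey_node. Qed.

Lemma key4_cut_root_edge y : key4 (cut_root_edge y) = cut_root_edge_key (key3 y).
Proof. by []. Qed.

Lemma key3_close_quad x : key3 (close_quad x) = close_quad_key (key4 x).
Proof.
rewrite /key3 /close_quad /key4 /= skey_cat skey1 ckey_node; congr (ssort (_ ++ _), _, _).
rewrite /nonempty_node; case: x.1.1.1 => [|t F] //=.
rewrite skey1 ckey_node; case E: (skey (t :: F)) => //.
by move: (size_skey (t :: F)); rewrite E.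
Qed.

Lemma child_eq_keys c : eq_keys key4 (lhs_quads c) (rhs_quads c) ->
  eq_keys key3 (lhs_trips c) (rhs_trips c) -> eq_keys key4 (lhs_child c) (rhs_child c).
Proof.
move=> Hquads Htrips; apply: eq_keys_cat.
  exact: eq_keys_map key4_keep_root_edge Hquads.
exact: eq_keys_map key4_cut_root_edge Htrips.
Qed.

Lemma lhs_rhs_tree t :
  eq_keys key4 (lhs_quads t) (rhs_quads t) /\ eq_keys key3 (lhs_trips t) (rhs_trips t).
Proof.
elim/tree_rect_all: t => cs IH.
have Hquads : eq_keys key4 (lhs_quads (Node cs)) (rhs_quads (Node cs)).
  apply: eq_keys_trans (lhs_quads_node cs) _; apply: eq_keys_trans (eq_keys_sym (rhs_quads_node cs)).
  apply: eq_keys_cat_quads; apply: eq_keys_seq_map; apply: all_prop_impl IH => c [H1 H2].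
  exact: child_eq_keys.
split => //.
apply: eq_keys_trans (lhs_trips_split _) _; apply: eq_keys_trans (eq_keys_sym (rhs_trips_split _)).
apply: eq_keys_cat => //.
exact: eq_keys_map key3_close_quad Hquads.
Qed.

(* The identity for a forest u follows by multiplicativity: both sides are
   obtained by choosing one term for each tree of u and concatenating. *)

Definition lhs_forest (u : forest) : seq trip :=
  [seq (p.1, q.1, q.2) | p <- PhiF u, q <- DeltaF p.2].
Definition rhs_forest (u : forest) : seq trip :=
  flatten [seq [seq (p.1 ++ p'.1, p.2, p'.2) | p <- PhiF q.1, p' <- PhiF q.2] | q <- DeltaF u].

Definition cat_trips (l : seq trip) : trip :=
  (flatten [seq x.1.1 | x <- l], flatten [seq x.1.2 | x <- l], flatten [seq x.2 | x <- l]).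

Definition cat_keys3 (ks : seq keys3) : keys3 :=
  (ssort (flatten [seq x.1.1 | x <- ks]), ssort (flatten [seq x.1.2 | x <- ks]),
   ssort (flatten [seq x.2 | x <- ks])).

Lemma key3_cat_trips w : key3 (cat_trips w) = cat_keys3 (map key3 w).
Proof. by rewrite /key3 /cat_trips /cat_keys3 /= !skey_flatten -!map_comp. Qed.

Lemma eq_keys_cat_trips ls ls' :
  eq_keys_seq key3 ls ls' -> eq_keys key3 (map cat_trips (choices ls)) (map cat_trips (choices ls')).
Proof. exact: eq_keys_choices key3_cat_trips. Qed.

Definition lhs_trip_of (z : (forest * tree) * (forest * forest)) : trip := (z.1.1, z.2.1, z.2.2).

Lemma lhs_forest_trees u : eq_keys key3 (lhs_forest u) (map cat_trips (choices (map lhs_trips u))).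
Proof.
move=> phi; rewrite /lhs_forest big_allpairs_nat /PhiF !big_map.
under eq_bigr => l _ do rewrite /DeltaF big_map -map_comp.
rewrite (big_choices_dep (fun x => cutsT x.2) _
   (fun l ys => phi (key3 (flatten [seq p.1 | p <- l], (cat_pairs ys).1, (cat_pairs ys).2)))).
rewrite (_ : map lhs_trips u = map (map lhs_trip_of)
   [seq [seq (x, y) | x <- a, y <- cutsT x.2] | a <- map PhiT u]); last first.
  by rewrite -!map_comp; apply: eq_map => t /=; rewrite /lhs_trips map_allpairs.
rewrite (big_choices_map lhs_trip_of _ (fun w => phi (key3 (cat_trips w)))).
by apply: eq_bigr => zs _; rewrite /cat_trips /cat_pairs /= -!map_comp.
Qed.

Definition rhs_tree_choices (x : forest * forest) := [seq (y, z) | y <- PhiF x.1, z <- PhiF x.2].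
Definition rhs_trip_of (z : (forest * forest) * ((forest * forest) * (forest * forest))) : trip :=
  (z.2.1.1 ++ z.2.2.1, z.2.1.2, z.2.2.2).
Definition rhs_trips_pieces (t : tree) :=
  map rhs_trip_of [seq (x, yz) | x <- cutsT t, yz <- rhs_tree_choices x].

Lemma rhs_trips_pieces_eq t : eq_keys key3 (rhs_trips t) (rhs_trips_pieces t).
Proof.
move=> phi; rewrite /rhs_trips /rhs_trips_pieces big_flatten /= !big_map big_allpairs_nat.
by apply: eq_bigr => q _; rewrite /rhs_tree_choices !big_allpairs_nat.
Qed.

Lemma rhs_forest_trees u :
  eq_keys key3 (rhs_forest u) (map cat_trips (choices (map rhs_trips_pieces u))).
Proof.
pose key_of (w : seq ((forest * forest) * (forest * forest))) :=
  key3 ((cat_pairs (map fst w)).1 ++ (cat_pairs (map snd w)).1,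
        (cat_pairs (map fst w)).2, (cat_pairs (map snd w)).2).
move=> phi; rewrite /rhs_forest big_flatten /= /DeltaF !big_map.
under eq_bigr => l _.
  rewrite big_allpairs_nat /cat_pairs; cbn [fst snd]; rewrite big_PhiF_flatten.
  under eq_bigr => ps _ do rewrite big_PhiF_flatten -map_comp.
  rewrite -map_comp (big_choices_pair (fun x => PhiF x.1) (fun x => PhiF x.2) l
     (fun ps ps' => phi (key3 ((cat_pairs ps).1 ++ (cat_pairs ps').1,
                               (cat_pairs ps).2, (cat_pairs ps').2)))).
over.
rewrite (big_choices_dep rhs_tree_choices _ (fun _ w => phi (key_of w))).
under eq_bigr => zs _.
  rewrite (_ : key_of _ = key3 (cat_trips (map rhs_trip_of zs))); last first.
    rewrite /key_of /key3 /cat_trips /cat_pairs; cbn [fst snd]; rewrite -!map_comp.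
    by congr (_, _, _); apply: (skey_flatten_cat (fun z => z.2.1.1) (fun z => z.2.2.1)).
over.
by rewrite -(big_choices_map rhs_trip_of _ (fun w => phi (key3 (cat_trips w)))) -!map_comp.
Qed.

Lemma lhs_rhs_forest u : eq_keys key3 (lhs_forest u) (rhs_forest u).
Proof.
apply: eq_keys_trans (lhs_forest_trees u) _; apply: eq_keys_trans (eq_keys_sym (rhs_forest_trees u)).
apply: eq_keys_cat_trips; apply: eq_keys_seq_map; apply: all_propP => t.
exact: eq_keys_trans (lhs_rhs_tree t).2 (rhs_trips_pieces_eq t).
Qed.

(* Subforests consist of nontrivial trees, where a linear form on H is
   iso-invariant. *)

Fixpoint mtree_rect_all (P : mtree -> Prop) (H : forall b cs, all_prop P cs -> P (MNode b cs))
    (m : mtree) : P m :=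
  let: MNode b cs := m in
  H b cs ((fix all_children (cs : seq mtree) : all_prop P cs :=
             if cs is c :: cs' then conj (mtree_rect_all H c) (all_children cs') else I) cs).

Lemma all_flatten (X : Type) (a : pred X) (ss : seq (seq X)) : all a (flatten ss) = all (all a) ss.
Proof. by elim: ss => //= s ss IH; rewrite all_cat IH. Qed.

Lemma all_choices (X : Type) (Q : pred X) (ls : seq (seq X)) :
  all_prop (fun a => all Q a) ls -> all (all Q) (choices ls).
Proof.
elim: ls => [|a ls IH] //= [Ha Hl].
rewrite all_flatten all_map; elim: a Ha => //= x a IHa /andP[Hx Ha].
rewrite IHa // andbT all_map; apply: sub_all (IH Hl) => r /=.
by rewrite Hx.
Qed.

Lemma comps_nontriv m b : all nontriv (comps b m).
Proof.
elim/mtree_rect_all: m b => b0 cs IH b /=; rewrite all_cat; apply/andP; split.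
  case: ifP => //= /andP[_ Hkeep]; rewrite andbT.
  by elim: cs Hkeep {IH} => //= -[[] cs'] cs IH.
by rewrite all_flatten all_map; elim: cs IH => //= c cs IH [H1 H2]; rewrite H1 IH.
Qed.

Lemma PhiF_nontriv u : all (fun p => all nontriv p.1) (PhiF u).
Proof.
rewrite /PhiF all_map.
have : all (all (fun p : forest * tree => all nontriv p.1)) (choices [seq PhiT t | t <- u]).
  apply: all_choices; elim: u => //= t u IH; split => //.
  by rewrite /PhiT all_map; apply: sub_all (all_predT _) => m _; apply: comps_nontriv.
by apply: sub_all => l /=; rewrite all_flatten all_map.
Qed.

Lemma lhs_forest_nontriv u : all (fun t : trip => all nontriv t.1.1) (lhs_forest u).
Proof.
rewrite /lhs_forest all_flatten all_map; apply: sub_all (PhiF_nontriv u) => p /= H.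
by rewrite all_map; apply: sub_all (all_predT _).
Qed.

Lemma rhs_forest_nontriv u : all (fun t : trip => all nontriv t.1.1) (rhs_forest u).
Proof.
rewrite /rhs_forest all_flatten all_map; apply: sub_all (all_predT _) => q _ /=.
rewrite all_flatten all_map; apply: sub_all (PhiF_nontriv q.1) => p /= H.
by rewrite all_map; apply: sub_all (PhiF_nontriv q.2) => p' /= H'; rewrite all_cat H H'.
Qed.

Section WeightedSums.
Variable R : nmodType.
Local Open Scope ring_scope.

Lemma eq_big_all (X : Type) (P : pred X) (L : seq X) (f g : X -> R) :
  all P L -> (forall x, P x -> f x = g x) -> \sum_(x <- L) f x = \sum_(x <- L) g x.
Proof.
move=> HL H; elim: L HL => [|x L IH] /=; first by rewrite !big_nil.
by case/andP=> Hx HL; rewrite !big_cons H // IH.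
Qed.

Lemma eq_keys_big (X : Type) (K : eqType) (key : X -> K) (P : pred X) (w : X -> R) (x0 : X)
    L1 L2 :
  eq_keys key L1 L2 -> all P L1 -> all P L2 ->
  (forall x y, P x -> P y -> key x = key y -> w x = w y) ->
  \sum_(x <- L1) w x = \sum_(x <- L2) w x.
Proof.
move=> HK H1 H2 Hw; pose S := L1 ++ L2.
pose psi kx := w (nth x0 S (index kx (map key S))).
have HS : all P S by rewrite all_cat H1 H2.
have Hpsi x : P x -> key x \in map key S -> w x = psi (key x).
  move=> Px Hin; have Hi : (index (key x) (map key S) < size S)%N.
    by rewrite -(size_map key) index_mem.
  apply: Hw => //; first by move/all_nthP: HS; apply.
  by rewrite -(nth_map x0 (key x0)) // nth_index.
have in_S L : all P L -> all (fun x => key x \in map key S) L ->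
    \sum_(x <- L) w x = \sum_(x <- L) psi (key x).
  move=> HP Hin; apply: (eq_big_all (P := fun x => P x && (key x \in map key S))).
    by rewrite all_predI HP Hin.
  by move=> x /andP[Px Hx]; apply: Hpsi.
have key_in L : all (fun x => key x \in map key L) L.
  by elim: L => //= x L IH; rewrite mem_head; apply: sub_all IH => y Hy; rewrite inE Hy orbT.
rewrite (in_S L1) ?(in_S L2) //; first last.
- by apply: sub_all (key_in L1) => x; rewrite map_cat mem_cat => ->.
- by apply: sub_all (key_in L2) => x; rewrite map_cat mem_cat => ->; rewrite orbT.
rewrite -(big_map key xpredT psi) -[RHS](big_map key xpredT psi).
exact/perm_big/eq_keys_perm.
Qed.

End WeightedSums.

Import GRing.Theory.
Local Open Scope ring_scope.

Lemma DeltaCK_tL (k : fieldType) (a : Hlinform k) : iso_invariant a ->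
  forall x F G, coef2 (DeltaCK (tL a x)) F G = coef2 (tLm a (DeltaCK x)) F G.
Proof.
move=> a_iso x F G.
pose W (c : k) (t : trip) := if forest_iso t.1.2 F && forest_iso t.2 G then c * a t.1.1 else 0.
have -> : coef2 (DeltaCK (tL a x)) F G = \sum_(cu <- x) \sum_(t <- lhs_forest cu.2) W cu.1 t.
  rewrite /coef2 big_mkcond /DeltaCK /tL big_flatten /= big_map big_flatten /= big_map.
  apply: eq_bigr => cu _; rewrite big_map /lhs_forest big_allpairs_dep; apply: eq_bigr => p _.
  by rewrite big_map; apply: eq_bigr.
have -> : coef2 (tLm a (DeltaCK x)) F G = \sum_(cu <- x) \sum_(t <- rhs_forest cu.2) W cu.1 t.
  rewrite /coef2 big_mkcond /DeltaCK /tLm big_flatten /= big_map big_flatten /= big_map.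
  apply: eq_bigr => cu _; rewrite big_map /rhs_forest big_flatten /= [RHS]big_map.
  by apply: eq_bigr => q _; rewrite !big_allpairs_dep; apply: eq_bigr => p _; apply: eq_bigr.
apply: eq_bigr => cu _.
apply: (eq_keys_big (P := fun t : trip => all nontriv t.1.1) ([::], [::], [::])
          (lhs_rhs_forest cu.2) (lhs_forest_nontriv _) (rhs_forest_nontriv _)).
move=> s t Hs Ht [E1 E2 E3]; rewrite /W !forest_isoE E2 E3; case: ifP => // _.
by rewrite (a_iso s.1.1 t.1.1) // forest_isoE E1.
Qed.

Lemma tLm_tLtens (k : fieldType) (a : Hlinform k) (A : seq (Hlinform k * Hlinform k)) :
  (forall X Y : forest, all nontriv X -> all nontriv Y ->
        a (X ++ Y) = \sum_(p <- A) p.1 X * p.2 Y) ->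
  forall y F G, coef2 (tLm a y) F G = coef2 (flatten [seq tLtens p.1 p.2 y | p <- A]) F G.
Proof.
move=> a_split y F G.
rewrite /coef2 !big_mkcond big_flatten /= big_map /tLm big_flatten /= big_map.
under [RHS]eq_bigr => pa _ do rewrite /tLtens big_flatten /= big_map.
rewrite [RHS]exchange_big /=; apply: eq_bigr => c _.
rewrite big_allpairs_dep.
under [RHS]eq_bigr => pa _ do rewrite big_mkcond big_allpairs_dep.
rewrite [RHS]exchange_big /=; apply: (eq_big_all (PhiF_nontriv c.2.1)) => p Hp.
rewrite [RHS]exchange_big /=; apply: (eq_big_all (PhiF_nontriv c.2.2)) => q Hq.
case: ifP => _; last by rewrite big1.
by rewrite a_split // big_distrr; apply: eq_bigr => pa _; rewrite -mulrA.
Qed.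

Unset Implicit Arguments. Set Strict Implicit.
Theorem mainTheorem5 (k : fieldType) (chark : [pchar k] =i pred0) :
  (forall (a : Hlinform k), iso_invariant a ->
     forall (x : HCK k) (F G : forest),
       coef2 (DeltaCK (tL a x)) F G = coef2 (tLm a (DeltaCK x)) F G)
  /\
  (forall (a : Hlinform k) (A : seq (Hlinform k * Hlinform k)),
     in_graded_dual a ->
     all_prop (fun p => in_graded_dual p.1 /\ in_graded_dual p.2) A ->
     (forall X Y : forest, all nontriv X -> all nontriv Y ->
        a (X ++ Y) = \sum_(p <- A) p.1 X * p.2 Y) ->
     forall (x : HCK k) (F G : forest),
       coef2 (DeltaCK (tL a x)) F G
       = coef2 (flatten [seq tLtens p.1 p.2 (DeltaCK x) | p <- A]) F G).
Proof.
split; first exact: DeltaCK_tL.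
move=> a A [a_iso _] _ a_split x F G.
by rewrite DeltaCK_tL //; apply: tLm_tLtens.
Qed.
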